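(* Let $\gamma\in C^{2}(\mathbb{R})$ be either an odd or an even function which is convex on $(0,\infty)$ and satisfies: (i) $\gamma(0)=\gamma'(0)=0$; (ii) $\frac{\gamma''(t)}{\gamma'(t)}$ is decreasing on $(0,\infty)$; (iii) there is a constant $C_1>0$ with $\frac{t\gamma''(t)}{\gamma'(t)}\geq C_1$ for all $t\in(0,\infty)$; (iv) $\gamma''$ is monotone on $(0,\infty)$. Fix $x,y\in\mathbb{R}$, a real number $\omega>0$ and an integer $k\geq 0$, and for $z$ with $1\leq z-y<z-x\leq 2$ set $$\Upsilon(z):=\frac{\gamma(\omega 2^k (z-x))-\gamma(\omega 2^k(z-y))}{\omega 2^k\gamma'(\omega 2^k(z-x))-\omega 2^k\gamma'(\omega 2^k(z-y))}.$$ Then $\Upsilon$ is increasing on the set $\{z:1\leq z-y<z-x\leq 2\}$, and $\Upsilon(z)\leq \frac{2}{C_1}$ on this set, uniformly in $\omega$ and $k$. *)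

From Stdlib Require Import Reals.
From Coquelicot Require Import Coquelicot.
Open Scope R_scope.

Definition C2 (g : R -> R) : Prop :=
  (forall t, ex_derive g t) /\
  (forall t, ex_derive (Derive g) t) /\
  (forall t, continuous (Derive (Derive g)) t).

Definition odd_fun (g : R -> R) : Prop := forall t, g (- t) = - g t.
Definition even_fun (g : R -> R) : Prop := forall t, g (- t) = g t.

Definition convex_pos (g : R -> R) : Prop :=
  forall a b l, 0 < a -> 0 < b -> 0 <= l <= 1 ->
    g (l * a + (1 - l) * b) <= l * g a + (1 - l) * g b.

Definition decreasing_pos (f : R -> R) : Prop :=
  forall s t, 0 < s -> s <= t -> f t <= f s.
Definition increasing_pos (f : R -> R) : Prop :=
  forall s t, 0 < s -> s <= t -> f s <= f t.

Definition in_Zset (x y z : R) : Prop := 1 <= z - y /\ z - y < z - x /\ z - x <= 2.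

Definition Upsilon (g : R -> R) (omega : R) (k : nat) (x y z : R) : R :=
  let lam := omega * 2 ^ k in
  (g (lam * (z - x)) - g (lam * (z - y))) /
  (lam * Derive g (lam * (z - x)) - lam * Derive g (lam * (z - y))).

(* Let r = γ'/γ''. By (iii), γ''/γ' >= C1/t > 0 on (0,oo), so γ' and γ'' never vanish
   there, γ'' has constant sign (it is continuous), r is nondecreasing by (ii), and
   r(t) <= t/C1. For 0 < b < a, Cauchy's mean value theorem gives
   γ(a) - γ(b) = (γ'(a) - γ'(b)) r(c) with c in [b, a]; since Υ(z) is this secant
   quotient at a = λ(z-x), b = λ(z-y) divided by λ = ω 2^k, we get
   Υ(z) = r(c)/λ <= a/(C1 λ) = (z-x)/C1 <= 2/C1.
   For monotonicity, move b with a - b fixed: the derivative of the secant quotient has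
   numerator D² - N (γ''(a) - γ''(b)), where D = γ'(a) - γ'(b) = γ''(d)(a-b) and
   N = D r(c), and it equals
   (a-b) (γ''(d)γ''(a) (r(a) - r(c)) + γ''(d)γ''(b) (r(c) - r(b))) >= 0. *)

From Stdlib Require Import Reals Lra Psatz.
From Coquelicot Require Import Coquelicot.
Open Scope R_scope.

Lemma ex_derive_continuity_pt (f : R -> R) (t : R) :
  ex_derive f t -> continuity_pt f t.
Proof.
  intro Hf. apply continuity_pt_filterlim. exact (ex_derive_continuous f t Hf).
Qed.

Lemma mvt (f f' : R -> R) (a b : R) :
  a < b -> (forall t, a <= t <= b -> is_derive f t (f' t)) ->
  exists c, a <= c <= b /\ f b - f a = f' c * (b - a).
Proof.
  intros Hab Hf.
  destruct (MVT_gen f a b f') as [c [Hc E]].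
  - intros t Ht. rewrite Rmin_left, Rmax_right in Ht by lra. apply Hf. lra.
  - intros t Ht. rewrite Rmin_left, Rmax_right in Ht by lra.
    apply ex_derive_continuity_pt. eexists. apply Hf. exact Ht.
  - rewrite Rmin_left, Rmax_right in Hc by lra. exists c. auto.
Qed.

Lemma cauchy_mvt (f f' g g' : R -> R) (a b : R) :
  a < b ->
  (forall t, a <= t <= b -> is_derive f t (f' t)) ->
  (forall t, a <= t <= b -> is_derive g t (g' t)) ->
  exists c, a <= c <= b /\ (f b - f a) * g' c = (g b - g a) * f' c.
Proof.
  intros Hab Hf Hg.
  set (A := f b - f a). set (B := g b - g a).
  destruct (mvt (fun t => A * g t - B * f t) (fun t => A * g' t - B * f' t) a b)
    as [c [Hc E]]; [exact Hab| |].
  - intros t Ht. apply @is_derive_minus; apply @is_derive_scal; auto.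
  - exists c. split; [exact Hc|].
    assert (Hzero : (A * g' c - B * f' c) * (b - a) = 0) by (rewrite <- E; unfold A, B; ring).
    apply Rmult_integral in Hzero. lra.
Qed.

Lemma nondecreasing_of_derive_nonneg (f f' : R -> R) (a b : R) :
  a <= b ->
  (forall t, a <= t <= b -> is_derive f t (f' t)) ->
  (forall t, a <= t <= b -> 0 <= f' t) ->
  f a <= f b.
Proof.
  intros Hab Hf Hf'.
  destruct (Rle_lt_or_eq_dec a b Hab) as [Hlt|<-]; [|lra].
  destruct (mvt f f' a b Hlt Hf) as [c [Hc E]].
  assert (0 <= f' c * (b - a)) by (apply Rmult_le_pos; [apply Hf'|]; lra).
  lra.
Qed.

Lemma nonvanishing_same_sign (h : R -> R) (s t : R) :
  (forall u, continuous h u) -> (forall u, 0 < u -> h u <> 0) ->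
  0 < s -> 0 < t -> 0 < h s * h t.
Proof.
  intros Hc Hnz Hs Ht.
  destruct (Rlt_or_le 0 (h s * h t)) as [Hpos|Hle]; [exact Hpos|exfalso].
  destruct (IVT_gen h s t 0) as [u [Hu Hu0]].
  - intro u. apply continuity_pt_filterlim, Hc.
  - unfold Rmin, Rmax; destruct (Rle_dec _ _); nra.
  - apply (Hnz u); [|exact Hu0].
    revert Hu; unfold Rmin, Rmax; destruct (Rle_dec _ _); lra.
Qed.

Lemma ratio_pos_of_lower_bound (t u v C : R) :
  0 < t -> 0 < C -> t * u / v >= C -> 0 < u / v.
Proof.
  intros Ht HC Hlow. unfold Rdiv in *. rewrite Rmult_assoc in Hlow. nra.
Qed.

Lemma inv_ratio_le_of_lower_bound (t u v C : R) :
  0 < t -> 0 < C -> t * u / v >= C -> v / u <= t / C.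
Proof.
  intros Ht HC Hlow.
  assert (Hq := ratio_pos_of_lower_bound t u v C Ht HC Hlow).
  rewrite <- (Rinv_div u v).
  replace (t * u / v) with (t * (u / v)) in Hlow by (unfold Rdiv; ring).
  set (q := u / v) in *.
  apply (Rmult_le_reg_l (q * C)); [nra|].
  replace (q * C * / q) with C by (field; lra).
  replace (q * C * (t / C)) with (t * q) by (field; lra).
  lra.
Qed.

Definition secant_quotient (g : R -> R) (a b : R) : R :=
  (g a - g b) / (Derive g a - Derive g b).

Definition derive_quotient (g : R -> R) (t : R) : R :=
  Derive g t / Derive (Derive g) t.

Lemma Upsilon_eq (g : R -> R) (omega : R) (k : nat) (x y z : R) :
  Upsilon g omega k x y z =
  secant_quotient g (omega * 2 ^ k * (z - x)) (omega * 2 ^ k * (z - y)) / (omega * 2 ^ k).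
Proof.
  unfold Upsilon, secant_quotient, Rdiv.
  rewrite <- Rmult_minus_distr_l, Rinv_mult. ring.
Qed.

Section SecantQuotient.

Variable g : R -> R.
Local Notation g' := (Derive g).
Local Notation g'' := (Derive (Derive g)).

Hypothesis g_derivable : forall t, ex_derive g t.
Hypothesis Derive_derivable : forall t, ex_derive g' t.
Hypothesis Derive2_continuous : forall t, continuous g'' t.
Hypothesis ratio_pos : forall t, 0 < t -> 0 < g'' t / g' t.
Hypothesis ratio_decreasing : decreasing_pos (fun t => g'' t / g' t).

Lemma Derive_neq0 (t : R) : 0 < t -> g' t <> 0 /\ g'' t <> 0.
Proof.
  intro Ht. assert (Hq := ratio_pos t Ht).
  split; intro E; rewrite E in Hq; unfold Rdiv in Hq.
  - rewrite Rinv_0, Rmult_0_r in Hq. lra.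
  - rewrite Rmult_0_l in Hq. lra.
Qed.

Lemma Derive2_same_sign (s t : R) : 0 < s -> 0 < t -> 0 < g'' s * g'' t.
Proof.
  apply nonvanishing_same_sign; [exact Derive2_continuous|].
  intros u Hu. apply (Derive_neq0 u Hu).
Qed.

Lemma derive_quotient_nondecreasing : increasing_pos (derive_quotient g).
Proof.
  intros s t Hs Hst. unfold derive_quotient.
  rewrite <- (Rinv_div (g'' s)), <- (Rinv_div (g'' t)).
  apply Rinv_le_contravar; [apply ratio_pos; lra|].
  exact (ratio_decreasing s t Hs Hst).
Qed.

Lemma Derive_eq_derive_quotient_mul (t : R) :
  0 < t -> g' t = derive_quotient g t * g'' t.
Proof.
  intro Ht. unfold derive_quotient. field. apply (Derive_neq0 t Ht).
Qed.

Lemma Derive_sub_mean_value (a b : R) :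
  0 < b < a -> exists d, b <= d <= a /\ g' a - g' b = g'' d * (a - b).
Proof.
  intros Hba. apply mvt; [lra|].
  intros t _. apply Derive_correct, Derive_derivable.
Qed.

Lemma Derive_sub_neq0 (a b : R) : 0 < b < a -> g' a - g' b <> 0.
Proof.
  intros Hba. destruct (Derive_sub_mean_value a b Hba) as [d [Hd ->]].
  apply Rmult_integral_contrapositive. split; [apply (Derive_neq0 d)|]; lra.
Qed.

Lemma secant_mean_value (a b : R) :
  0 < b < a -> exists c, b <= c <= a /\ g a - g b = (g' a - g' b) * derive_quotient g c.
Proof.
  intros Hba.
  destruct (cauchy_mvt g' g'' g g' b a) as [c [Hc E]]; [lra| | |].
  - intros t _. apply Derive_correct, Derive_derivable.
  - intros t _. apply Derive_correct, g_derivable.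
  - exists c. split; [exact Hc|].
    destruct (Derive_neq0 c) as [_ Hc'']; [lra|].
    unfold derive_quotient. apply (Rmult_eq_reg_r (g'' c)); [|exact Hc''].
    rewrite <- E. field. exact Hc''.
Qed.

Lemma secant_cross_le (a b : R) :
  0 < b < a -> (g a - g b) * (g'' a - g'' b) <= (g' a - g' b) ^ 2.
Proof.
  intros Hba.
  destruct (secant_mean_value a b Hba) as [c [Hc ->]].
  destruct (Derive_sub_mean_value a b Hba) as [d [Hd Ed]].
  set (r := derive_quotient g).
  assert (ED : g' a - g' b = r a * g'' a - r b * g'' b).
  { rewrite <- !Derive_eq_derive_quotient_mul by lra. reflexivity. }
  assert (E : (g' a - g' b) ^ 2 - (g' a - g' b) * r c * (g'' a - g'' b)
            = (a - b) * ((g'' d * g'' a) * (r a - r c) + (g'' d * g'' b) * (r c - r b))).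
  { replace ((g' a - g' b) ^ 2) with ((g' a - g' b) * (g' a - g' b)) by ring.
    rewrite ED at 2. rewrite Ed. ring. }
  assert (0 <= (a - b) * ((g'' d * g'' a) * (r a - r c) + (g'' d * g'' b) * (r c - r b))).
  { assert (0 < g'' d * g'' a) by (apply Derive2_same_sign; lra).
    assert (0 < g'' d * g'' b) by (apply Derive2_same_sign; lra).
    assert (r c <= r a) by (apply derive_quotient_nondecreasing; lra).
    assert (r b <= r c) by (apply derive_quotient_nondecreasing; lra).
    apply Rmult_le_pos; [lra|].
    apply Rplus_le_le_0_compat; apply Rmult_le_pos; lra. }
  lra.
Qed.

Lemma is_derive_secant_quotient_shift (h t : R) :
  g' (t + h) - g' t <> 0 ->
  is_derive (fun s => secant_quotient g (s + h) s) t
    (((g' (t + h) - g' t) ^ 2 - (g (t + h) - g t) * (g'' (t + h) - g'' t))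
     / (g' (t + h) - g' t) ^ 2).
Proof.
  intros HD. unfold secant_quotient. auto_derive.
  - repeat split; auto.
  - change (fun x => g' x) with g'; change (fun x => g x) with g. field. exact HD.
Qed.

Lemma secant_quotient_shift_nondecreasing (h s t : R) :
  0 < h -> 0 < s -> s <= t ->
  secant_quotient g (s + h) s <= secant_quotient g (t + h) t.
Proof.
  intros Hh Hs Hst.
  eapply (nondecreasing_of_derive_nonneg (fun u => secant_quotient g (u + h) u) _ s t Hst).
  - intros u Hu. apply is_derive_secant_quotient_shift, Derive_sub_neq0. lra.
  - intros u Hu. apply Rmult_le_pos.
    + assert (Hcross := secant_cross_le (u + h) u ltac:(lra)). lra.
    + apply Rlt_le, Rinv_0_lt_compat, pow2_gt_0, Derive_sub_neq0. lra.
Qed.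

Lemma Upsilon_nondecreasing (omega : R) (k : nat) (x y z1 z2 : R) :
  0 < omega -> x < y -> y < z1 -> z1 <= z2 ->
  Upsilon g omega k x y z1 <= Upsilon g omega k x y z2.
Proof.
  intros Hom Hxy Hz1 Hz12. rewrite !Upsilon_eq.
  set (l := omega * 2 ^ k).
  assert (Hl : 0 < l) by (apply Rmult_lt_0_compat; [|apply pow_lt]; lra).
  assert (Eshift : forall z, l * (z - x) = l * (z - y) + l * (y - x)) by (intro; ring).
  rewrite (Eshift z1), (Eshift z2). unfold Rdiv.
  apply Rmult_le_compat_r; [apply Rlt_le, Rinv_0_lt_compat, Hl|].
  apply secant_quotient_shift_nondecreasing;
    [apply Rmult_lt_0_compat | apply Rmult_lt_0_compat | apply Rmult_le_compat_l]; lra.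
Qed.

Lemma Upsilon_le (C1 omega : R) (k : nat) (x y z : R) :
  0 < C1 -> (forall t, 0 < t -> derive_quotient g t <= t / C1) ->
  0 < omega -> x < y -> y < z ->
  Upsilon g omega k x y z <= (z - x) / C1.
Proof.
  intros HC1 Hr Hom Hxy Hyz. rewrite Upsilon_eq.
  set (l := omega * 2 ^ k).
  assert (Hl : 0 < l) by (apply Rmult_lt_0_compat; [|apply pow_lt]; lra).
  assert (Hba : 0 < l * (z - y) < l * (z - x)).
  { split; [apply Rmult_lt_0_compat | apply Rmult_lt_compat_l]; lra. }
  destruct (secant_mean_value _ _ Hba) as [c [Hc E]].
  assert (HD := Derive_sub_neq0 _ _ Hba).
  unfold secant_quotient. rewrite E.
  replace ((g' (l * (z - x)) - g' (l * (z - y))) * derive_quotient g c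
             / (g' (l * (z - x)) - g' (l * (z - y))) / l)
    with (derive_quotient g c / l) by (field; split; lra).
  replace ((z - x) / C1) with (l * (z - x) / C1 / l) by (field; lra).
  unfold Rdiv. apply Rmult_le_compat_r; [apply Rlt_le, Rinv_0_lt_compat, Hl|].
  apply (Rle_trans _ (c / C1)); [apply Hr; lra|].
  apply Rmult_le_compat_r; [apply Rlt_le, Rinv_0_lt_compat|]; lra.
Qed.

End SecantQuotient.

Theorem lemma3p2 (gamma : R -> R) (C1 : R) :
  C2 gamma ->
  (odd_fun gamma \/ even_fun gamma) ->
  convex_pos gamma ->
  gamma 0 = 0 -> Derive gamma 0 = 0 ->
  decreasing_pos (fun t => Derive (Derive gamma) t / Derive gamma t) ->
  0 < C1 ->
  (forall t, 0 < t -> t * Derive (Derive gamma) t / Derive gamma t >= C1) ->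
  (increasing_pos (Derive (Derive gamma)) \/ decreasing_pos (Derive (Derive gamma))) ->
  forall (x y omega : R) (k : nat), 0 < omega ->
    (forall z1 z2, in_Zset x y z1 -> in_Zset x y z2 -> z1 <= z2 ->
       Upsilon gamma omega k x y z1 <= Upsilon gamma omega k x y z2) /\
    (forall z, in_Zset x y z -> Upsilon gamma omega k x y z <= 2 / C1).
Proof.
  intros [Hd1 [Hd2 Hc2]] _ _ _ _ Hdec HC1 Hlow _ x y omega k Hom.
  assert (Hpos : forall t, 0 < t -> 0 < Derive (Derive gamma) t / Derive gamma t).
  { intros t Ht. exact (ratio_pos_of_lower_bound _ _ _ _ Ht HC1 (Hlow t Ht)). }
  split.
  - intros z1 z2 [Hz1 [Hxy _]] _ Hz12.
    apply Upsilon_nondecreasing; auto; lra.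
  - intros z [Hz [Hxy Hz2]].
    apply (Rle_trans _ ((z - x) / C1)).
    + apply Upsilon_le; auto; try lra.
      intros t Ht. exact (inv_ratio_le_of_lower_bound _ _ _ _ Ht HC1 (Hlow t Ht)).
    + unfold Rdiv. apply Rmult_le_compat_r; [apply Rlt_le, Rinv_0_lt_compat|]; lra.
Qed.
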